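(* Assume Assumptions 1, 2 and 3 (stated in the context). Fix a triple $(i,j,k)$ and an interval $[T_0,T_1]\subseteq[0,T]$ with $T_0<T_1$, and let $\theta$ range over parameters for which $\bar{\mathcal{P}}_{ijk}(T_0,T_1,\theta)$ is defined. If $\theta$ varies so that for some $t\in[T_0,T_1]$ one has $\text{dist}(b_{ij}(t,\theta),o_k)\to d_0$, then $\bar{\mathcal{P}}_{ijk}(T_0,T_1,\theta)\to\infty$.
   Context: An articulated robot consists of finitely many rigid bodies. For a finite-dimensional trajectory parameter vector $\theta$ and $t\in[0,T]$, the $i$-th body occupies $b_i(t,\theta)\subset\mathbb{R}^3$; obstacles occupy $o\subset\mathbb{R}^3$; $d_0\ge0$ is a safe distance; $\text{dist}(A,B)$ is the shortest Euclidean distance between sets. Assumption 1: there are finite decompositions $b_i(t,\theta)=\bigcup_j b_{ij}(t,\theta)$, $o=\bigcup_k o_k$ such that each $(t,\theta)\mapsto\text{dist}(b_{ij}(t,\theta),o_k)$ is sufficiently smooth. Assumption 2: the feasible domain of $t$ and $\theta$ is bounded. Assumption 3: $\mathcal{P}$ is a sufficiently smooth, monotonically decreasing function on $(0,\infty)$ with $\lim_{x\to0}\mathcal{P}(x)=\infty$, $\lim_{x\to\infty}\mathcal{P}(x)=0$, and $\lim_{x\to0}x\mathcal{P}(x)=\infty$. Define $\mathcal{P}_{ijk}(t,\theta)=\mathcal{P}(\text{dist}(b_{ij}(t,\theta),o_k)-d_0)$ and $\bar{\mathcal{P}}_{ijk}(T_0,T_1,\theta)=\int_{T_0}^{T_1}\mathcal{P}_{ijk}(t,\theta)\,dt$.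 *)

From HB Require Import structures.
From mathcomp Require Import all_boot all_order all_algebra.
From mathcomp Require Import all_classical all_reals all_analysis.
Set Implicit Arguments. Unset Strict Implicit. Unset Printing Implicit Defensive.
Import Order.TTheory GRing.Theory Num.Theory.
Import numFieldNormedType.Exports.
Local Open Scope classical_set_scope.
Local Open Scope ring_scope.

Definition eucl3 {R : realType} (v : 'rV[R]_3) : R :=
  Num.sqrt (\sum_(i < 3) v ord0 i ^+ 2).

Definition setdist {R : realType} (A B : set 'rV[R]_3) : R :=
  inf [set eucl3 (a - b) | a in A & b in B].

Definition C1_on {R : realType} (V : normedModType R) (U : set V) (f : V -> R) :=
  (forall x, U x -> differentiable f x) /\
  (forall v x, U x -> {for x, continuous (fun y => 'D_v f y)}).

(* Let e_n be the excess dist(b(t, theta_n), o) - d0 > 0, so e_n -> 0.  By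
   compactness of [0, T] x closure Theta and continuity of the partial time
   derivative, the distance is L-Lipschitz in t uniformly in theta.  Hence on a
   subinterval of [T0, T1] of length e_n / L the excess stays below 2 e_n, where
   the nonincreasing penalty is at least P (2 e_n).  The integral is thus at
   least e_n P (2 e_n) / L = (2 e_n) P (2 e_n) / (2 L), which tends to +oo since
   x P x -> +oo as x -> 0+. *)

From HB Require Import structures.
From mathcomp Require Import all_boot all_order all_algebra.
From mathcomp Require Import all_classical all_reals all_analysis.
From mathcomp Require Import lra.
Import Order.TTheory GRing.Theory Num.Theory.
Import numFieldNormedType.Exports.
Local Open Scope classical_set_scope.
Local Open Scope ring_scope.

Section penalty_integral.
Context {R : realType}.
Implicit Types (f g P : R -> R).

Lemma nonincreasing_cvgy0_ge0 P :
  (forall x y, 0 < x -> x <= y -> P y <= P x) ->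
  P x @[x --> +oo] --> 0 -> forall x, 0 < x -> 0 <= P x.
Proof.
move=> P_dec P_y x x_gt0; rewrite -(cvg_lim _ P_y).
apply: limr_le; first by apply/cvg_ex; exists 0.
by near=> y; apply: P_dec => //; near: y; apply: nbhs_pinfty_ge; exact: num_real.
Unshelve. all: by end_near.
Qed.

Lemma cvg_at_right_gt {T} (F : set_system T) {FF : Filter F} (u : T -> R) p :
  (forall x, p < u x) -> u x @[x --> F] --> p -> u x @[x --> F] --> p^'+.
Proof.
by move=> u_gt u_cvg A /u_cvg; apply: (filterS (F := F)) => x /=; apply.
Qed.

Lemma measurable_fun_itv_continuous g (a b : R) :
  (forall s, a <= s <= b -> {for s, continuous g}) -> measurable_fun `[a, b] g.
Proof.
move=> g_cont; apply: measurable_realfun.subspace_continuous_measurable_fun => //.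
by apply: continuous_in_subspaceT => s /set_mem; rewrite /= in_itv /=; exact: g_cont.
Qed.

Lemma bounded_derive_lipschitz f df (a b M : R) :
  (forall x, a <= x <= b -> is_derive x 1 f (df x)) ->
  (forall x, a <= x <= b -> `|df x| <= M) ->
  forall s t, a <= s <= b -> a <= t <= b -> `|f s - f t| <= M * `|s - t|.
Proof.
move=> fdf dfM.
suff le_st s t : a <= s -> s <= t -> t <= b -> `|f t - f s| <= M * `|t - s|.
  move=> s t /andP[a_s s_b] /andP[a_t t_b]; case: (leP s t) => [st|/ltW ts].
    by rewrite distrC (distrC s); exact: le_st.
  exact: le_st.
move=> a_s st t_b.
have inab x : x \in `[s, t] -> a <= x <= b.
  by rewrite in_itv /= => /andP[sx xt]; rewrite (le_trans a_s sx) (le_trans xt t_b).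
have [||x /inab xab ->] := @MVT_segment R f df s t st.
- by move=> x /subset_itv_oo_cc /inab /fdf.
- by apply: derivable_within_continuous => x /inab /fdf [].
- by rewrite normrM ler_wpM2r // dfM.
Qed.

Lemma is_derive_partial1 {V W : normedModType R} {F : R * V -> W} {u : R} {v : V} :
  differentiable F (u, v) ->
  is_derive u 1 (fun s => F (s, v)) ('D_((1, 0) : R * V) F (u, v)).
Proof.
move=> dF.
have shift_eq : (fun h : R => h^-1 *: (F (h *: 1 + u, v) - F (u, v))) =
    (fun h : R => h^-1 *: (F (h *: ((1, 0) : R * V) + (u, v)) - F (u, v))).
  apply/funext => h; congr (_ *: (F _ - _)).
  by apply/pair_equal_spec; split => /=; rewrite ?scaler0 ?add0r.
apply: DeriveDef; last by rewrite /derive shift_eq.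
by rewrite /derivable shift_eq; exact: diff_derivable.
Qed.

Lemma differentiable_continuous_partial1 {V W : normedModType R} {F : R * V -> W}
    {u : R} {v : V} :
  differentiable F (u, v) -> {for u, continuous (fun s => F (s, v))}.
Proof.
by move=> /is_derive_partial1 [/derivable1_diffP /differentiable_continuous].
Qed.

Lemma bounded_closure_compact n (A : set 'rV[R]_n) :
  bounded_set A -> compact (closure A).
Proof.
move=> [M [Mreal AM]].
have /AM AM1 : M < `|M| + 1 by rewrite (le_lt_trans (real_ler_norm Mreal)) ?ltrDl.
apply: bounded_closed_compact; last exact: closed_closure.
have sub_ball :
    closure A `<=` closure (closed_ball_ Num.norm (0 : 'rV[R]_n) (`|M| + 1)).
  by apply: closureS => x /AM1; rewrite /closed_ball_ /= sub0r normrN.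
exists (`|M| + 1); split; first exact: num_real.
move=> N /ltW MN x /sub_ball/closed_closed_ball_.
rewrite /closed_ball_ /= sub0r normrN => x_le.
exact: le_trans MN.
Qed.

Lemma C1_on_lipschitz_partial1 {m} {F : R * 'rV[R]_m -> R} {a b : R}
    {Theta : set 'rV[R]_m} {U : set (R * 'rV[R]_m)} :
  bounded_set Theta -> `[a, b] `*` closure Theta `<=` U -> C1_on U F ->
  exists2 L, 0 < L & forall v, Theta v -> forall s t, a <= s <= b -> a <= t <= b ->
    `|F (s, v) - F (t, v)| <= L * `|s - t|.
Proof.
move=> bdTheta KU [dF cD].
set K := `[a, b] `*` closure Theta.
set D := fun p => 'D_((1, 0) : R * 'rV[R]_m) F p.
have inK v u : Theta v -> a <= u <= b -> K (u, v).
  by move=> Tv uab; split; [rewrite /= in_itv | exact: subset_closure].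
have cK : compact K.
  by apply: compact_setX; [exact: segment_compact | exact: bounded_closure_compact].
have cDK : {within K, continuous D}.
  by apply: continuous_in_subspaceT => p /set_mem /KU; exact: cD.
have [M [Mreal DM]] := compact_bounded (continuous_compact cDK cK).
have /DM DM1 : M < `|M| + 1 by rewrite (le_lt_trans (real_ler_norm Mreal)) ?ltrDl.
exists (`|M| + 1); first by rewrite ltr_pwDr.
move=> v Tv; apply: (@bounded_derive_lipschitz _ (fun u => D (u, v))).
- by move=> u /(inK v u Tv) /KU /dF; exact: is_derive_partial1.
- by move=> u /(inK v u Tv) Kuv; apply: DM1; exists (u, v).
Qed.

Lemma integral_ge_cst_subitv g (T0 T1 a r c : R) :
  measurable_fun `[T0, T1] g -> (forall s, T0 <= s <= T1 -> 0 <= g s) ->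
  T0 <= a -> a + r <= T1 -> 0 < r -> 0 <= c ->
  (forall s, a <= s <= a + r -> c <= g s) ->
  ((c * r)%:E <= \int[lebesgue_measure]_(s in `[T0, T1]) (g s)%:E)%E.
Proof.
move=> mg g_ge0 T0a arT1 r_gt0 c_ge0 g_ge.
have sub : `[a, a + r] `<=` `[T0, T1].
  move=> s /=; rewrite !in_itv /= => /andP[a_s sar].
  by rewrite (le_trans T0a a_s) (le_trans sar arT1).
have int_sub : (\int[lebesgue_measure]_(s in `[a, (a + r)%R]) (g s)%:E <=
                \int[lebesgue_measure]_(s in `[T0, T1]) (g s)%:E)%E.
  apply: ge0_subset_integral => //; exact/measurable_realfun.measurable_EFinP.
apply: le_trans int_sub.
have mu_ar : lebesgue_measure `[a, a + r] = r%:E :> \bar R.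
  by rewrite lebesgue_measure_itv /= lte_fin ltrDl r_gt0 -EFinD addrAC subrr add0r.
rewrite EFinM -mu_ar -integral_cst //.
apply: ge0_le_integral => //.
  by apply/measurable_realfun.measurable_EFinP; exact: measurable_funS mg.
Qed.

Lemma penalty_integral_ge {f P} {L T0 T1 t : R} :
  0 < L -> T0 <= t <= T1 ->
  (forall s u, T0 <= s <= T1 -> T0 <= u <= T1 -> `|f s - f u| <= L * `|s - u|) ->
  (forall s, T0 <= s <= T1 -> 0 < f s) ->
  (forall x y, 0 < x -> x <= y -> P y <= P x) ->
  (forall x, 0 < x -> 0 <= P x) ->
  measurable_fun `[T0, T1] (fun s => P (f s)) ->
  2 * f t <= L * (T1 - T0) ->
  ((P (2 * f t) * (f t / L))%:E <=
    \int[lebesgue_measure]_(s in `[T0, T1]) (P (f s))%:E)%E.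
Proof.
move=> L_gt0 tin f_lip f_gt0 P_dec P_ge0 mPf ft_small.
have /andP[T0t tT1] := tin.
set r := f t / L.
have Lr : L * r = f t by rewrite mulrC divfK ?gt_eqF.
have r_gt0 : 0 < r by rewrite divr_gt0 ?f_gt0.
have r_small : 2 * r <= T1 - T0.
  by rewrite -(ler_pM2l L_gt0) mulrCA Lr.
have [a [T0a arT1 t_a a_t]] : exists a, [/\ T0 <= a, a + r <= T1, t - r <= a & a <= t].
  by case: (lerP (t + r) T1) => [|/ltW] trT1; [exists t | exists (t - r)]; split; lra.
have s_in s : a <= s <= a + r -> T0 <= s <= T1.
  by case/andP=> a_s sar; apply/andP; split; lra.
apply: (integral_ge_cst_subitv _ _ _ a) => //.
- by move=> s sin; apply: P_ge0; exact: f_gt0.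
- by apply: P_ge0; rewrite mulr_gt0 ?f_gt0.
move=> s sar; apply: P_dec; first exact: f_gt0 (s_in s sar).
have st_le : `|s - t| <= r by rewrite ler_distl; case/andP: sar => ? ?; apply/andP; split; lra.
have := f_lip s t (s_in s sar) tin.
rewrite -(ler_pM2l L_gt0) Lr in st_le.
by move=> /(le_trans (ler_norm _)); lra.
Qed.

End penalty_integral.

Theorem lemma2 (R : realType) (m : nat)
  (b : R -> 'rV[R]_m -> set 'rV[R]_3)   (* the piece b_ij(t, theta) *)
  (o : set 'rV[R]_3)                    (* the obstacle piece o_k *)
  (d0 T T0 T1 : R) (Theta : set 'rV[R]_m) (P : R -> R)
  (U : set (R * 'rV[R]_m)) :
  0 <= d0 ->
  (* Assumption 2: the feasible domain [0,T] x Theta is bounded *)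
  bounded_set Theta ->
  (* Assumption 1: (t,theta) |-> dist(b_ij(t,theta), o_k) is C^1 on an open
     neighbourhood of the closure of the feasible domain *)
  open U -> (`[0, T] `*` closure Theta) `<=` U ->
  C1_on U (fun p : R * 'rV[R]_m => setdist (b p.1 p.2) o) ->
  (* Assumption 3 *)
  (forall x, 0 < x -> derivable P x 1) ->
  (forall x, 0 < x -> {for x, continuous (derive1 P)}) ->
  (forall x y, 0 < x -> x <= y -> P y <= P x) ->
  P x @[x --> 0^'+] --> +oo ->
  P x @[x --> +oo] --> 0 ->
  (x * P x) @[x --> 0^'+] --> +oo ->
  0 <= T0 -> T0 < T1 -> T1 <= T ->
  forall (theta : nat -> 'rV[R]_m),
    (forall n, Theta (theta n)) ->
    (* Pbar_ijk(T0,T1,theta n) is defined *)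
    (forall n t, T0 <= t <= T1 -> d0 < setdist (b t (theta n)) o) ->
    forall t, T0 <= t <= T1 ->
      setdist (b t (theta n)) o @[n --> \oo] --> d0 ->
      (\int[lebesgue_measure]_(s in `[T0, T1])
          (P (setdist (b s (theta n)) o - d0))%:E)%E @[n --> \oo] --> +oo%E.
Proof.
move=> _ bdTheta _ KU C1 P_der _ P_dec _ P_y xP_0 T0_ge0 T01 T1T theta
  Theta_theta dist_gt t tin dist_cvg.
set F := fun n s => setdist (b s (theta n)) o - d0.
have KU' : `[T0, T1] `*` closure Theta `<=` U.
  apply: subset_trans KU; apply: setSX => // s /=; rewrite !in_itv /=.
  by case/andP=> T0s sT1; rewrite (le_trans T0_ge0 T0s) (le_trans sT1 T1T).
have [L L_gt0 dist_lip] := C1_on_lipschitz_partial1 bdTheta KU' C1.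
have F_gt0 n s : T0 <= s <= T1 -> 0 < F n s by move/dist_gt; rewrite subr_gt0.
have F_lip n s u : T0 <= s <= T1 -> T0 <= u <= T1 -> `|F n s - F n u| <= L * `|s - u|.
  by move=> s_in u_in; rewrite /F opprB addrA subrK; exact: dist_lip.
have F_meas n : measurable_fun `[T0, T1] (fun s => P (F n s)).
  apply: measurable_fun_itv_continuous => s sin; apply: continuous_comp.
    have Ks : (`[T0, T1] `*` closure Theta) (s, theta n).
      by split; [rewrite /= in_itv | exact/subset_closure/Theta_theta].
    exact: cvgB (differentiable_continuous_partial1 (C1.1 _ (KU' _ Ks))) (cvg_cst _).
  by apply/differentiable_continuous/derivable1_diffP/P_der; exact: F_gt0.
have Ft_cvg : (2 * F n t) @[n --> \oo] --> 0^'+.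
  apply: cvg_at_right_gt => [n|]; first by rewrite mulr_gt0 ?F_gt0.
  by rewrite -(mulr0 2) -(subrr d0); exact: cvgMr (cvgB dist_cvg (cvg_cst _)).
have P_ge0 := nonincreasing_cvgy0_ge0 P P_dec P_y.
move/cvgryPge in xP_0; apply/cvgeyPge => A.
have small_x : \forall x \near 0^'+, 2 * L * A <= x * P x /\ x <= L * (T1 - T0).
  near=> x; split; near: x; first exact: xP_0.
  by apply: nbhs_right_le; rewrite mulr_gt0 // subr_gt0.
apply: (filterS (F := \oo) _ (Ft_cvg _ small_x)) => n /= [xP_ge x_small].
have := penalty_integral_ge L_gt0 tin (F_lip n) (F_gt0 n) P_dec P_ge0 (F_meas n) x_small.
apply: le_trans.
rewrite lee_fin mulrA ler_pdivlMr //; lra.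
Unshelve. all: by end_near.
Qed.
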